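(* Let $p$ be a prime, $m\ge 1$ and $r$ integers with $r^p\equiv 1 \pmod m$, and let $G=\langle x, y\mid x^p=y^m=1,\ x^{-1}yx=y^r\rangle$ (so $G\cong C_p\ltimes C_m$, $|G|=pm$), where $p$ is the smallest prime divisor of $|G|$ and $\gcd(p(r-1), m)=1$. Let $N=\langle y\rangle$ and let $\varphi:G\to G/N$ be the canonical homomorphism. Let $T=g_1\cdot \ldots \cdot g_t$ be a sequence over $G$ such that $\varphi(T)=\varphi(g_1)\cdot\ldots\cdot\varphi(g_t)$ is a minimal product-one sequence over $G/N$. Then for any $u\in\pi(T)$ we have $\pi(T)\supseteq \{u^{r^{s_{1}}}, u^{r^{s_{2}}}, \ldots, u^{r^{s_{t}}}\}$ for some subset $\{s_1,\ldots, s_t\}\subseteq [0,p-1]$. Moreover, if $u\neq 1$, then $t\le p$ and $u^{r^{s_i}}\neq u^{r^{s_j}}$ for all $1\leq i<j\leq t$.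
   Context: A sequence over a group is a finite unordered list of elements with repetition allowed. For a sequence $S=g_1\cdot\ldots\cdot g_\ell$, $\pi(S)=\{g_{\tau(1)}\cdots g_{\tau(\ell)}:\tau \text{ a permutation of } [1,\ell]\}$. $S$ is product-one if $1\in\pi(S)$, and minimal product-one if it is product-one and has no proper nonempty product-one subsequence. For integers $a\le b$, $[a,b]=\{z\in\mathbb Z: a\le z\le b\}$. *)

From HB Require Import structures.
From mathcomp Require Import all_boot all_order all_algebra all_fingroup.
Set Implicit Arguments. Unset Strict Implicit. Unset Printing Implicit Defensive.
Import GRing.Theory.

(* Sequences over a finite group are modelled by [seq gT] (order irrelevant:
   every notion below is invariant under permutation). *)

Definition in_pi (gT : finGroupType) (s : seq gT) (u : gT) : Prop :=
  exists2 t : seq gT, perm_eq t s & (\prod_(g <- t) g)%g = u.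

Definition product_one (gT : finGroupType) (s : seq gT) : Prop :=
  in_pi s 1%g.

Definition min_product_one (gT : finGroupType) (s : seq gT) : Prop :=
  product_one s /\
  forall b : bitseq, (0 < size (mask b s) < size s)%N -> ~ product_one (mask b s).

Definition zexpg (gT : finGroupType) (x : gT) (z : int) : gT :=
  match z with
  | Posz n => (x ^+ n)%g
  | Negz n => ((x ^+ n.+1)^-1)%g
  end.

(* Order T as L with product u.  Since phi(T) is product-one and G/N = <xN> is
   abelian, u lies in N.  Rotating L after its j-th prefix product P_j gives
   the product u ^ P_j; as N is abelian this conjugate only depends on the
   coset P_j N = x^e_j N, so it equals u ^ x^e_j = u^(r^e_j) with e_j < p.
   The e_j are distinct: equal prefix cosets would make the segment of L between
   them a proper nonempty product-one subsequence of phi(T).  If u <> 1 then x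
   does not centralise u (else u^(r-1) = 1 with r - 1 prime to #[u]), hence
   neither does any x^a with 0 < a < p, which generates <x>. *)

From HB Require Import structures.
From mathcomp Require Import all_boot all_order all_algebra all_fingroup.
From mathcomp Require Import cyclic zify.
Import GRing.Theory.

Set Implicit Arguments.
Unset Strict Implicit.
Unset Printing Implicit Defensive.

Local Open Scope group_scope.

Section IntegerPowers.
Variable gT : finGroupType.
Implicit Type g : gT.

Lemma zexpg_eq_expg g (m k : nat) (z : int) :
  g ^+ m = 1 -> (z == k %[mod m])%Z -> zexpg g z = g ^+ k.
Proof.
move=> gm; case: z => [n|n] /=.
  by rewrite !modz_nat => /eqP [] e; rewrite -(expg_mod _ gm) e expg_mod.
rewrite NegzE eqz_mod_dvd dvdzE => /eqP.
have -> : `|(- (n.+1)%:Z - k%:Z)%R|%N = (n.+1 + k)%N by lia.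
move=> mk; have gnk : g ^+ (n.+1 + k) = 1 by rewrite -(expg_mod _ gm) mk.
by rewrite -[RHS](mulKg (g ^+ n.+1)) -expgD gnk mulg1.
Qed.

Lemma zexpg_fixed_eq1 g (z : int) :
  zexpg g z = g -> coprimez (z - 1)%R #[g] -> g = 1.
Proof.
set k := `|(z %% #[g])%Z|%N.
have zk : (z == k %[mod #[g]])%Z.
  by rewrite /k gez0_abs ?modz_ge0 ?modz_mod // -lt0n order_gt0.
rewrite (zexpg_eq_expg (expg_order g) zk) => gk.
have : (k == 1 %[mod #[g]])%N by rewrite -eq_expg_mod_order gk expg1.
move=> /eqP k1; rewrite /coprimez => /eqP cop.
apply/eqP; rewrite -order_eq1 -dvdn1; change (#[g]%:Z %| 1)%Z.
rewrite -[1%Z]cop dvdz_gcd dvdzz andbT.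
by rewrite -eqz_mod_dvd (eqP zk) !modz_nat k1.
Qed.

End IntegerPowers.

Lemma subseq_perm_mask (T : eqType) (s1 s2 s : seq T) :
  perm_eq s1 s2 -> subseq s s1 -> exists b, perm_eq (mask b s2) s.
Proof.
move=> p12 ss1.
have /count_maskP[b _ pb] : forall z, (count_mem z s <= count_mem z s2)%N.
  by move=> z; rewrite -(seq.permP p12); apply: leq_count_subseq.
by exists b; rewrite perm_sym.
Qed.

Section SequenceProducts.
Variable gT : finGroupType.
Implicit Types (s L : seq gT).

Lemma prod_rot L j :
  \prod_(g <- rot j L) g = (\prod_(g <- L) g) ^ (\prod_(g <- take j L) g).
Proof.
by rewrite -{2}(cat_take_drop j L) /rot !big_cat /= conjgE !mulgA mulVg mul1g.
Qed.

Lemma min_product_one_prefix_inj s L i j :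
    min_product_one s -> perm_eq L s -> (i < size s)%N -> (j < size s)%N ->
  \prod_(g <- take i L) g = \prod_(g <- take j L) g -> i = j.
Proof.
move=> [_ minS] pLs.
wlog ij : i j / (i < j)%N.
  move=> wlog_ij ilt jlt eij; case: (ltngtP i j) => // [ij|ji].
    exact: wlog_ij.
  by apply/esym/wlog_ij.
move=> _ jlt eij; set B := drop i (take j L).
have prodB : \prod_(g <- B) g = 1.
  apply: (mulgI (\prod_(g <- take i L) g)); rewrite mulg1 {2}eij -big_cat /=.
  by rewrite -(cat_take_drop i (take j L)) take_takel // ltnW.
have [b pb] : exists b, perm_eq (mask b s) B.
  apply: subseq_perm_mask pLs _.
  by rewrite (subseq_trans (drop_subseq _ _)) ?take_subseq.
have sizeB : size B = (j - i)%N by rewrite size_drop size_take (perm_size pLs) jlt.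
case: (minS b); last by exists B; rewrite // perm_sym.
by rewrite (perm_size pb) sizeB; apply/andP; split; lia.
Qed.

End SequenceProducts.

Section DiscreteLog.
Variables (gT : finGroupType) (c : gT).

Definition dlog (d : gT) : nat := index d (mkseq (expgn c) #[c]).

Lemma mem_mkseq_expg d : d \in <[c]> -> d \in mkseq (expgn c) #[c].
Proof.
case/cycleP=> i ->; rewrite -expg_mod_order.
by apply: map_f; rewrite mem_iota ltn_mod order_gt0.
Qed.

Lemma dlog_lt d : d \in <[c]> -> (dlog d < #[c])%N.
Proof. by move/mem_mkseq_expg; rewrite -index_mem size_mkseq. Qed.

Lemma dlogK d : d \in <[c]> -> c ^+ dlog d = d.
Proof.
move=> cd; have := nth_index 1 (mem_mkseq_expg cd).
by rewrite nth_mkseq ?dlog_lt.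
Qed.

Lemma dlog_inj : {in <[c]> &, injective dlog}.
Proof. exact: can_in_inj dlogK. Qed.

Lemma prod_cycle_perm s1 s2 :
  all (mem <[c]>) s1 -> perm_eq s1 s2 -> \prod_(g <- s1) g = \prod_(g <- s2) g.
Proof.
have prodE s : all (mem <[c]>) s -> \prod_(g <- s) g = c ^+ (\sum_(g <- s) dlog g).
  move=> /allP sc; rewrite (big_morph _ (expgD c) (expg0 c)) big_seq [RHS]big_seq.
  by apply: eq_bigr => g /sc /dlogK.
by move=> s1c p12; rewrite prodE // prodE -?(perm_all _ p12) // (perm_big _ p12).
Qed.

End DiscreteLog.

Section Conjugation.
Variable gT : finGroupType.
Implicit Types (w g h x : gT) (N : {group gT}).

Lemma conjg_cent1 w g : (w ^ g == w) = (g \in 'C[w]).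
Proof. by rewrite conjg_fix cent1C; apply/commgP/cent1P. Qed.

Lemma conj_coset_abelian N w g h :
    abelian N -> w \in N -> g \in 'N(N) -> h \in 'N(N) ->
  coset N g = coset N h -> w ^ g = w ^ h.
Proof.
move=> abN wN gN hN /(kercoset_rcoset gN hN)[n nN ->].
rewrite conjgM; congr (_ ^ h); apply/eqP; rewrite conjg_cent1.
by apply/cent1P; exact: (centsP abN).
Qed.

Lemma conj_expg_inj w x p a b :
    prime p -> x ^+ p = 1 -> w ^ x != w -> (a < p)%N -> (b < p)%N ->
  w ^ (x ^+ a) = w ^ (x ^+ b) -> a = b.
Proof.
move=> pp xp wx; wlog ab : a b / (a < b)%N.
  move=> wlog_ab alt blt eab; case: (ltngtP a b) => // [ab|ba].
    exact: wlog_ab.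
  by apply/esym/wlog_ab.
move=> _ blt eab; case/negP: wx; rewrite conjg_cent1.
have cop : coprime #[x] (b - a).
  apply: coprime_dvdl (_ : #[x] %| p)%N _; first by rewrite order_dvdn xp.
  by rewrite prime_coprime // gtnNdvd ?subn_gt0 //; lia.
have xba : x ^+ (b - a) \in 'C[w].
  rewrite -conjg_cent1; apply/eqP/(conjg_inj (x ^+ a)).
  by rewrite -conjgM -expgD subnK ?eab // ltnW.
move: cop; rewrite -generator_coprime => /eqP xgen.
by rewrite -cycle_subG xgen cycle_subG.
Qed.

End Conjugation.

Section CyclicExtension.
Variables (gT : finGroupType) (x y : gT) (r : int).
Hypothesis yx : y ^ x = zexpg y r.

Let k := `|(r %% #[y])%Z|%N.

Let r_mod_k : (r == k %[mod #[y]])%Z.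
Proof. by rewrite /k gez0_abs ?modz_ge0 ?modz_mod // -lt0n order_gt0. Qed.

Let yx_expg : y ^ x = y ^+ k.
Proof. by rewrite yx (zexpg_eq_expg (expg_order y) r_mod_k). Qed.

Let conjX_cycle_expg a u : u \in <[y]> -> u ^ (x ^+ a) = u ^+ (k ^ a).
Proof.
case/cycleP=> i ->; elim: a => [|a IHa]; first by rewrite conjg1 expn0 expg1.
rewrite expgSr conjgM IHa conjXg conjXg yx_expg -!expgM expnSr.
by rewrite mulnCA [(k * _)%N]mulnC.
Qed.

Lemma conjX_cycle a u : u \in <[y]> -> u ^ (x ^+ a) = zexpg u (r ^+ a).
Proof.
move=> yu; rewrite conjX_cycle_expg // (zexpg_eq_expg (k := k ^ a) (expg_cardG yu)) //.
by rewrite -[Posz (k ^ a)]natz natrX natz -modzXm (eqP r_mod_k) modzXm.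
Qed.

Lemma norm_cycle : x \in 'N(<[y]>).
Proof.
apply/normP/eqP; rewrite eqEcard cardJg leqnn andbT.
by rewrite -cycleJ yx_expg cycle_subG mem_cycle.
Qed.

Lemma gen_set2_sub_cosetpre :
  <<[set x; y]>> \subset coset <[y]> @*^-1 <[coset <[y]> x]>.
Proof.
rewrite gen_subG; apply/subsetP => g /set2P[] -> {g}; apply/morphpreP.
  by split; [exact: norm_cycle | exact: cycle_id].
split; first exact: subsetP (normG _) y (cycle_id y).
by rewrite /= coset_id ?cycle_id ?group1.
Qed.

Lemma conj_fixed_cycle_eq1 u :
  coprimez (r - 1)%R #[y] -> u \in <[y]> -> u ^ x = u -> u = 1.
Proof.
move=> cop yu ux; apply: (zexpg_fixed_eq1 (z := r)).
  by rewrite -[r]expr1 -conjX_cycle // expg1 ux.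
exact: coprimez_dvdr (order_dvdG yu) cop.
Qed.

End CyclicExtension.

Section CyclicQuotientPrefixes.
Variables (gT : finGroupType) (N : {group gT}) (x : gT) (T L : seq gT).
Hypotheses (L_sub : {subset L <= coset N @*^-1 <[coset N x]>})
  (pLT : perm_eq L T) (minT : min_product_one (map (coset N) T)).

Lemma prefix_cosetpre j :
  \prod_(g <- take j L) g \in coset N @*^-1 <[coset N x]>.
Proof. by rewrite big_seq group_prod // => g /mem_take /L_sub. Qed.

Lemma coset_prefix j :
  coset N (\prod_(g <- take j L) g) = \prod_(d <- take j (map (coset N) L)) d.
Proof.
rewrite -map_take big_map big_seq morph_prod; first by rewrite -big_seq.
by move=> g /mem_take /L_sub /morphpreP[].
Qed.

Lemma coset_prefix_cycle j :
  coset N (\prod_(g <- take j L) g) \in <[coset N x]>.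
Proof. by case/morphpreP: (prefix_cosetpre j). Qed.

Lemma prod_mem_ker : \prod_(g <- L) g \in N.
Proof.
have /morphpreP[LN _] := prefix_cosetpre (size L); rewrite take_size in LN.
apply: coset_idr => //; have := coset_prefix (size L).
rewrite take_size -(size_map (coset N)) take_size => ->.
case: minT => [[t pt t1] _]; apply: etrans t1.
apply: (prod_cycle_perm (c := coset N x)).
  by apply/allP=> _ /mapP[g /L_sub /morphpreP[] _ ? ->].
by rewrite (perm_trans (perm_map _ pLT)) // perm_sym.
Qed.

Lemma prefix_dlog_inj i j :
    (i < size T)%N -> (j < size T)%N ->
    dlog (coset N x) (coset N (\prod_(g <- take i L) g))
  = dlog (coset N x) (coset N (\prod_(g <- take j L) g)) -> i = j.
Proof.
move=> ilt jlt /(dlog_inj (coset_prefix_cycle i) (coset_prefix_cycle j)).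
rewrite !coset_prefix.
by apply: (min_product_one_prefix_inj minT); rewrite ?perm_map ?size_map.
Qed.

Lemma conj_prefix w j :
    abelian N -> x \in 'N(N) -> w \in N ->
  w ^ (\prod_(g <- take j L) g)
    = w ^ (x ^+ dlog (coset N x) (coset N (\prod_(g <- take j L) g))).
Proof.
move=> abN xN wN; have /morphpreP[PN _] := prefix_cosetpre j.
apply: conj_coset_abelian abN wN PN _ _; first by rewrite groupX.
by rewrite morphX // dlogK ?coset_prefix_cycle.
Qed.

End CyclicQuotientPrefixes.

Theorem lemma3p2 (p m : nat) (r : int)
  (gT : finGroupType) (G : {group gT}) (x y : gT) :
  prime p -> (0 < m)%N ->
  ((r ^+ p)%R == 1 %[mod m%:Z])%Z ->
  coprimez (p%:Z * (r - 1))%R m%:Z ->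
  G :=: <<[set x; y]>>%g ->
  (x ^+ p = 1)%g -> (y ^+ m = 1)%g -> (y ^ x = zexpg y r)%g ->
  #|G| = (p * m)%N ->
  (forall q : nat, prime q -> (q %| #|G|)%N -> (p <= q)%N) ->
  forall T : seq gT, all (mem G) T ->
  min_product_one (map (coset <[y]>%g) T) ->
  forall u : gT, in_pi T u ->
  exists s : seq nat,
    [/\ size s = size T, uniq s, all (fun k => (k < p)%N) s,
        (forall k, k \in s -> in_pi T (zexpg u (r ^+ k)%R)) &
        (u != 1%g -> (size T <= p)%N /\ uniq (map (fun k => zexpg u (r ^+ k)%R) s))].
Proof.
move=> p_pr _ _ cop defG xp ym yx _ _ T TG minT _ [L pLT <-].
set w := \prod_(g <- L) g; set N := <[y]>; set c := coset N x.
have xN : x \in 'N(N) := norm_cycle yx.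
have L_sub : {subset L <= coset N @*^-1 <[c]>}.
  move=> g gL; apply: (subsetP (gen_set2_sub_cosetpre yx)); rewrite -defG.
  by apply: (allP TG); rewrite -(perm_mem pLT).
have wN : w \in N := prod_mem_ker L_sub pLT minT.
pose e j := dlog c (coset N (\prod_(g <- take j L) g)).
pose s := [seq e j | j <- iota 0 (size T)].
have s_lt : all (fun a => a < p)%N s.
  apply/allP => _ /mapP[j _ ->].
  apply: leq_trans (dlog_lt (coset_prefix_cycle L_sub j)) _.
  by rewrite dvdn_leq ?prime_gt0 // order_dvdn /c -morphX // xp morph1.
have s_uniq : uniq s.
  rewrite map_inj_in_uniq ?iota_uniq // => i j; rewrite !mem_iota.
  case/andP=> _ ilt /andP[_ jlt].
  exact: prefix_dlog_inj L_sub pLT minT _ _ ilt jlt.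
exists s; split => //.
- by rewrite size_map size_iota.
- move=> _ /mapP[j _ ->]; exists (rot j L); rewrite ?perm_rot // prod_rot.
  by rewrite (conj_prefix L_sub j (cycle_abelian y) xN wN) (conjX_cycle yx).
move=> w1; have wx : w ^ x != w.
  apply: contra w1 => /eqP /(conj_fixed_cycle_eq1 yx _ wN) -> //.
  apply: coprimez_dvdr (_ : #[y] %| m)%N _; first by rewrite order_dvdn ym.
  by move: cop; rewrite coprimezMl => /andP[].
split.
  rewrite -(size_iota 0 p) -[size T](size_iota 0) -(size_map e).
  by apply: uniq_leq_size => // a; rewrite mem_iota; apply: (allP s_lt).
rewrite -(eq_map (fun a => conjX_cycle yx a wN)) map_inj_in_uniq // => a b ain bin.
exact: conj_expg_inj p_pr xp wx (allP s_lt a ain) (allP s_lt b bin).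
Qed.
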